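(* Assume $\rho=\rho_1$. Let $Y=(-\infty,1]\sqcup\big([0,\rho]\times\{\infty\}\big)$ with the following topology: $(-\infty,1]$ is an open subset carrying its usual topology; for $x\in[0,\rho]$, a base of neighborhoods of $(x,\infty)$ is formed by the sets $$\{(y,\infty): y\in[0,\rho],\ |y-x|<\varepsilon\}\ \cup\ \bigcup_{n>N}\Big(\big((-1)^n x-2\lfloor n/2\rfloor\rho-\varepsilon,\ (-1)^n x-2\lfloor n/2\rfloor\rho+\varepsilon\big)\cap(-\infty,1]\Big),$$ for $\varepsilon>0$, $N\in\mathbb N$. Then $(\widetilde X,\widetilde f)$ is topologically conjugate to $(Y,g)$, where $g$ is the homeomorphism of $Y$ given by $g(x)=\frac{x-\rho}{1-\rho}$ for $x\in(\rho,1]$, $g(x)=x-\rho$ for $x\in(-\infty,\rho]$, and $g(x,\infty)=(\rho-x,\infty)$ for $x\in[0,\rho]$. The conjugating homeomorphism maps $\widetilde X_1$ onto $(-\infty,1]$ and $\widetilde X\setminus\widetilde X_1$ onto $[0,\rho]\times\{\infty\}$. In particular $\widetilde f$ is an increasing map on the ray $(-\infty,1]$ with fixed point $1$, and an involution on $[0,\rho]\times\{\infty\}$.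
   Context: Standing setup. Fix real numbers $\rho,\delta,\gamma,\alpha$ with $0<\rho<1$, $\delta>0$, $\gamma>-\delta/\rho$, $-\delta/\rho<\alpha<0$. Define $f:[0,1]\to[0,1]$ by $f(x)=f_0(x):=\frac{\alpha x-\alpha\rho}{\gamma x+\delta}$ for $x\in[0,\rho]$ and $f(x)=f_1(x):=\frac{x-\rho}{1-\rho}$ for $x\in(\rho,1]$. Put $\rho_1:=f_0(0)$. The inverse limit is $\widetilde X=\{(x_0,x_1,\dots)\in[0,1]^{\mathbb N}: f(x_{n+1})=x_n \ \forall n\}$ with the product topology; the shift is $\widetilde f(x_0,x_1,\dots)=(f(x_0),x_0,x_1,\dots)$. $\widetilde X_1:=\{(x_0,x_1,\dots)\in\widetilde X:\lim_n x_n=1\}$. $\lfloor\cdot\rfloor$ is the integer part. *)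

From Stdlib Require Import Reals.
Open Scope R_scope.

Definition f0 (rho gamma delta alpha x : R) : R :=
  (alpha * x - alpha * rho) / (gamma * x + delta).
Definition f1 (rho x : R) : R := (x - rho) / (1 - rho).
Definition fmap (rho gamma delta alpha x : R) : R :=
  if Rle_dec x rho then f0 rho gamma delta alpha x else f1 rho x.

Definition Xt (rho gamma delta alpha : R) (x : nat -> R) : Prop :=
  forall n, 0 <= x n <= 1 /\ fmap rho gamma delta alpha (x (S n)) = x n.

Definition ftilde (rho gamma delta alpha : R) (x : nat -> R) : nat -> R :=
  fun n => match n with
           | O => fmap rho gamma delta alpha (x O)
           | S m => x m
           end.

Definition Xt1 (x : nat -> R) : Prop := Un_cv x 1.

(* open sets of the subspace  P  of the product space  R^N
   (product topology: basic neighbourhoods constrain finitely many coords) *)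
Definition openX (P : (nat -> R) -> Prop) (U : (nat -> R) -> Prop) : Prop :=
  (forall x, U x -> P x) /\
  (forall x, U x -> exists eps, eps > 0 /\ exists N : nat,
      forall y, P y -> (forall n, (n <= N)%nat -> Rabs (y n - x n) < eps) -> U y).

(* The space Y = (-oo,1] |_| ([0,rho] x {oo}):
   inl x  stands for x in (-oo,1],  inr x  stands for (x, oo). *)
Definition Yset (rho : R) (p : R + R) : Prop :=
  match p with
  | inl x => x <= 1
  | inr x => 0 <= x <= rho
  end.

Definition isinl (p : R + R) : Prop :=
  match p with inl _ => True | inr _ => False end.

Definition Ybasic (rho x eps : R) (N : nat) (p : R + R) : Prop :=
  match p with
  | inr y => 0 <= y <= rho /\ Rabs (y - x) < eps
  | inl y => y <= 1 /\ exists n : nat, (n > N)%nat /\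
        Rabs (y - ((-1) ^ n * x - 2 * INR (Nat.div2 n) * rho)) < eps
  end.

Definition openY (rho : R) (U : R + R -> Prop) : Prop :=
  (forall p, U p -> Yset rho p) /\
  (forall p, U p ->
     match p with
     | inl x => exists eps, eps > 0 /\
                  forall y, y <= 1 -> Rabs (y - x) < eps -> U (inl y)
     | inr x => exists eps, eps > 0 /\ exists N : nat,
                  forall q, Ybasic rho x eps N q -> U q
     end).

Definition gmap (rho : R) (p : R + R) : R + R :=
  match p with
  | inl x => inl (if Rle_dec x rho then x - rho else (x - rho) / (1 - rho))
  | inr x => inr (rho - x)
  end.

Definition homeo {S T : Type} (A : S -> Prop) (oA : (S -> Prop) -> Prop)
  (B : T -> Prop) (oB : (T -> Prop) -> Prop) (h : S -> T) : Prop :=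
  (forall x, A x -> B (h x)) /\
  (forall x y, A x -> A y -> h x = h y -> x = y) /\
  (forall y, B y -> exists x, A x /\ h x = y) /\
  (forall V, oB V -> oA (fun x => A x /\ V (h x))) /\
  (forall U, oA U -> oB (fun y => exists x, U x /\ h x = y)).

(* The conjugacy is built backwards, as a map [hinv] from Y onto the inverse
   limit.  Since rho = f0 0, the Moebius branch f0 is an involution of [0,rho]
   exchanging 0 and rho, and a Moebius self-map [sig] of [0,rho] conjugates the
   reflection s |-> rho - s to it.  On (-oo,rho] let [pi] be [sig] composed with
   the 2 rho-periodic triangle wave, and on [rho,1] the extension of [sig] that
   commutes with the inverse linear branch y |-> rho + (1 - rho) y; then
   f o pi = pi o g on the ray.  A point y of the ray goes to its backward
   g-orbit read through [pi], a point (s,oo) to the f0-orbit of [sig s].  All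
   these maps are bi-Lipschitz, which makes [hinv] a homeomorphism, and g is
   the conjugate of the shift homeomorphism by [hinv]. *)

From Stdlib Require Import Reals Lra Lia ZArith ClassicalEpsilon FunctionalExtensionality PropExtensionality.
Open Scope R_scope.

Lemma pred_ext {T : Type} (U V : T -> Prop) : (forall x, U x <-> V x) -> U = V.
Proof. intros H. extensionality x. apply propositional_extensionality, H. Qed.

Definition opens_within {T : Type} (A : T -> Prop) (oA : (T -> Prop) -> Prop) : Prop :=
  forall U, oA U -> forall x, U x -> A x.

Lemma homeo_comp {S T W : Type} (A : S -> Prop) oA (B : T -> Prop) oB (C : W -> Prop) oC
    (h1 : S -> T) (h2 : T -> W) :
  homeo A oA B oB h1 -> homeo B oB C oC h2 -> homeo A oA C oC (fun x => h2 (h1 x)).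
Proof.
  intros (h1B & h1inj & h1surj & h1cont & h1open) (h2C & h2inj & h2surj & h2cont & h2open).
  split; [|split; [|split; [|split]]].
  - auto.
  - intros x y Ax Ay E. apply h1inj, h2inj; auto.
  - intros z Cz. destruct (h2surj z Cz) as (y & By & <-).
    destruct (h1surj y By) as (x & Ax & <-). eauto.
  - intros V HV. specialize (h1cont _ (h2cont V HV)).
    replace (fun x => A x /\ V (h2 (h1 x))) with (fun x => A x /\ B (h1 x) /\ V (h2 (h1 x)));
      [exact h1cont|].
    apply pred_ext. intros x. split; [tauto|]. intros [Ax Vx]. auto.
  - intros U HU. specialize (h2open _ (h1open U HU)).
    replace (fun z => exists x, U x /\ h2 (h1 x) = z)
      with (fun z => exists y, (exists x, U x /\ h1 x = y) /\ h2 y = z); [exact h2open|].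
    apply pred_ext. intros z. split.
    + intros (y & (x & Ux & <-) & <-). eauto.
    + intros (x & Ux & <-). eauto.
Qed.

Lemma homeo_inv {S T : Type} (A : S -> Prop) oA (B : T -> Prop) oB (h : S -> T) (k : T -> S) :
  opens_within A oA -> opens_within B oB -> homeo A oA B oB h ->
  (forall x, A x -> k (h x) = x) -> homeo B oB A oA k.
Proof.
  intros HA HB (hB & hinj & hsurj & hcont & hopen) hK.
  assert (kA : forall y, B y -> A (k y) /\ h (k y) = y).
  { intros y By. destruct (hsurj y By) as (x & Ax & <-). rewrite hK; auto. }
  split; [|split; [|split; [|split]]].
  - apply kA.
  - intros y y' By By' E. rewrite <- (proj2 (kA y By)), <- (proj2 (kA y' By')), E. reflexivity.
  - intros x Ax. exists (h x). auto.
  - intros U HU. specialize (hopen U HU).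
    replace (fun y => B y /\ U (k y)) with (fun y => exists x, U x /\ h x = y); [exact hopen|].
    apply pred_ext. intros y. split.
    + intros (x & Ux & <-). pose proof (HA U HU x Ux). rewrite hK; auto.
    + intros [By Uy]. exists (k y). split; [auto|apply kA, By].
  - intros V HV. specialize (hcont V HV).
    replace (fun x => exists y, V y /\ k y = x) with (fun x => A x /\ V (h x)); [exact hcont|].
    apply pred_ext. intros x. split.
    + intros [Ax Vx]. exists (h x). auto.
    + intros (y & Vy & <-). destruct (kA y (HB V HV y Vy)) as [Ak hk]. rewrite hk. auto.
Qed.

Lemma homeo_ext {S T : Type} (A : S -> Prop) oA (B : T -> Prop) oB (h h' : S -> T) :
  opens_within A oA -> homeo A oA B oB h -> (forall x, A x -> h x = h' x) ->
  homeo A oA B oB h'.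
Proof.
  intros HA (hB & hinj & hsurj & hcont & hopen) E.
  split; [|split; [|split; [|split]]].
  - intros x Ax. rewrite <- E; auto.
  - intros x y Ax Ay. rewrite <- !E; auto.
  - intros y By. destruct (hsurj y By) as (x & Ax & <-). exists x. rewrite E; auto.
  - intros V HV. specialize (hcont V HV).
    replace (fun x => A x /\ V (h' x)) with (fun x => A x /\ V (h x)); [exact hcont|].
    apply pred_ext. intros x. split; intros [Ax Vx]; [rewrite <- E|rewrite E]; auto.
  - intros U HU. specialize (hopen U HU).
    replace (fun y => exists x, U x /\ h' x = y) with (fun y => exists x, U x /\ h x = y);
      [exact hopen|].
    apply pred_ext. intros y. split; intros (x & Ux & <-); exists x;
      rewrite ?E by exact (HA U HU x Ux); rewrite <- ?E by exact (HA U HU x Ux); auto.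
Qed.

Lemma Rdiv_bounds x y lo hi : 0 < y -> lo * y <= x <= hi * y -> lo <= x / y <= hi.
Proof.
  intros Hy Hx. assert (E : x = x / y * y) by (field; lra).
  rewrite E in Hx. split; apply Rmult_le_reg_r with y; lra.
Qed.

Lemma Rmult_lt_of_lt_div K d a : 0 < K -> d < a / K -> K * d < a.
Proof.
  intros HK H. apply Rmult_lt_compat_l with (r := K) in H; auto.
  replace (K * (a / K)) with a in H by (field; lra). exact H.
Qed.

Definition lipschitz_on (D : R -> Prop) (K : R) (f : R -> R) : Prop :=
  forall a b, D a -> D b -> Rabs (f a - f b) <= K * Rabs (a - b).

Definition bilipschitz_incr (K lo hi : R) (f : R -> R) : Prop :=
  forall a b, lo <= a -> a <= b -> b <= hi ->
    b - a <= K * (f b - f a) /\ f b - f a <= K * (b - a).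

Lemma lipschitz_on_glue (D : R -> Prop) K f m :
  D m -> lipschitz_on (fun x => D x /\ x <= m) K f -> lipschitz_on (fun x => D x /\ m <= x) K f ->
  lipschitz_on D K f.
Proof.
  intros Dm Hl Hr.
  assert (Hmid : forall a b, D a -> D b -> a <= m <= b -> Rabs (f a - f b) <= K * Rabs (a - b)).
  { intros a b Da Db Hab.
    pose proof (Hl a m (conj Da (proj1 Hab)) (conj Dm (Rle_refl m))) as Ha.
    pose proof (Hr m b (conj Dm (Rle_refl m)) (conj Db (proj2 Hab))) as Hb.
    pose proof (Rabs_triang (f a - f m) (f m - f b)) as Ht.
    replace (f a - f m + (f m - f b)) with (f a - f b) in Ht by ring.
    rewrite (Rabs_left1 (a - m)) in Ha by lra. rewrite (Rabs_left1 (m - b)) in Hb by lra.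
    rewrite (Rabs_left1 (a - b)) by lra. lra. }
  intros a b Da Db.
  destruct (Rle_dec a m), (Rle_dec b m).
  - apply Hl; auto.
  - apply Hmid; auto; lra.
  - rewrite Rabs_minus_sym, (Rabs_minus_sym a). apply Hmid; auto; lra.
  - apply Hr; split; auto; lra.
Qed.

Lemma lipschitz_on_comp (D E : R -> Prop) K L f g :
  0 <= L -> (forall x, D x -> E (f x)) -> lipschitz_on D K f -> lipschitz_on E L g ->
  lipschitz_on D (L * K) (fun x => g (f x)).
Proof.
  intros HL DE Hf Hg a b Da Db. eapply Rle_trans; [apply Hg; auto|].
  rewrite Rmult_assoc. apply Rmult_le_compat_l; auto.
Qed.

Lemma lipschitz_on_weaken (D D' : R -> Prop) K f :
  (forall x, D' x -> D x) -> lipschitz_on D K f -> lipschitz_on D' K f.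
Proof. intros HD Hf a b Da Db. auto. Qed.

Lemma lipschitz_on_ext (D : R -> Prop) K f g :
  (forall x, D x -> f x = g x) -> lipschitz_on D K f -> lipschitz_on D K g.
Proof. intros E Hf a b Da Db. rewrite <- !E by auto. auto. Qed.

Lemma lipschitz_on_le (D : R -> Prop) K K' f :
  K <= K' -> lipschitz_on D K f -> lipschitz_on D K' f.
Proof.
  intros HK Hf a b Da Db. eapply Rle_trans; [apply Hf; auto|].
  apply Rmult_le_compat_r; [apply Rabs_pos|auto].
Qed.

Lemma lipschitz_on_Un_cv (D : R -> Prop) K f u l : 0 < K -> lipschitz_on D K f ->
  (forall n, D (u n)) -> D l -> Un_cv u l -> Un_cv (fun n => f (u n)) (f l).
Proof.
  intros HK Hf Du Dl Hu eps Heps.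
  destruct (Hu (eps / K)) as [N HN]; [apply Rdiv_lt_0_compat; auto|].
  exists N. intros n Hn. unfold R_dist in *.
  eapply Rle_lt_trans; [apply Hf; auto|].
  apply Rmult_lt_of_lt_div; auto.
Qed.

Lemma bilipschitz_incr_split K lo m hi f :
  bilipschitz_incr K lo m f -> bilipschitz_incr K m hi f -> bilipschitz_incr K lo hi f.
Proof.
  intros Hl Hr a b Ha Hab Hb.
  destruct (Rle_dec b m); [apply Hl; lra|]. destruct (Rle_dec m a); [apply Hr; lra|].
  destruct (Hl a m) as [A B]; [lra..|]. destruct (Hr m b) as [C D]; [lra..|]. split; lra.
Qed.

Lemma bilipschitz_incr_ext K lo hi f g :
  (forall x, lo <= x <= hi -> f x = g x) -> bilipschitz_incr K lo hi f -> bilipschitz_incr K lo hi g.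
Proof. intros E Hf a b Ha Hab Hb. rewrite <- !E by lra. auto. Qed.

Lemma bilipschitz_incr_scale K lo hi f c : 0 < c ->
  bilipschitz_incr K lo hi f -> bilipschitz_incr K (c * lo) (c * hi) (fun x => c * f (x / c)).
Proof.
  intros Hc Hf a b Ha Hab Hb.
  destruct (Hf (a / c) (b / c)) as [A B].
  - apply Rmult_le_reg_l with c; auto. replace (c * (a / c)) with a by (field; lra). lra.
  - apply Rmult_le_compat_r; [apply Rlt_le, Rinv_0_lt_compat|]; auto.
  - apply Rmult_le_reg_l with c; auto. replace (c * (b / c)) with b by (field; lra). lra.
  - replace (b / c - a / c) with ((b - a) / c) in A, B by (field; lra).
    replace (b - a) with (c * ((b - a) / c)) at 1 by (field; lra).
    replace (K * (b - a)) with (c * (K * ((b - a) / c))) by (field; lra).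
    replace (K * (c * f (b / c) - c * f (a / c))) with (c * (K * (f (b / c) - f (a / c)))) by ring.
    replace (c * f (b / c) - c * f (a / c)) with (c * (f (b / c) - f (a / c))) by ring.
    split; apply Rmult_le_compat_l; lra.
Qed.

Lemma bilipschitz_incr_reflect K lo hi f c :
  bilipschitz_incr K lo hi f -> bilipschitz_incr K (c - hi) (c - lo) (fun x => c - f (c - x)).
Proof.
  intros Hf a b Ha Hab Hb. destruct (Hf (c - b) (c - a)) as [A B]; lra.
Qed.

Lemma bilipschitz_incr_abs K lo hi f : 0 < K -> bilipschitz_incr K lo hi f ->
  forall a b, lo <= a <= hi -> lo <= b <= hi ->
  Rabs (f a - f b) <= K * Rabs (a - b) /\ Rabs (a - b) <= K * Rabs (f a - f b).
Proof.
  intros HK Hf.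
  assert (Hle : forall a b, lo <= a -> a <= b -> b <= hi ->
    Rabs (f a - f b) <= K * Rabs (a - b) /\ Rabs (a - b) <= K * Rabs (f a - f b)).
  { intros a b Ha Hab Hb. destruct (Hf a b) as [A B]; auto.
    assert (f a <= f b) by nra. rewrite !Rabs_left1 by lra. split; lra. }
  intros a b Ha Hb. destruct (Rle_dec a b); [apply Hle; lra|].
  rewrite (Rabs_minus_sym (f a)), (Rabs_minus_sym a). apply Hle; lra.
Qed.

Lemma bilipschitz_incr_lipschitz K lo hi f : 0 < K -> bilipschitz_incr K lo hi f ->
  lipschitz_on (fun x => lo <= x <= hi) K f.
Proof. intros HK Hf a b Ha Hb. apply (bilipschitz_incr_abs K lo hi); auto. Qed.
Section Mobius.
Variable r : R.
Hypothesis Hr : 0 < r.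

Definition mobius (w s : R) : R := w * r * s / ((w - 1) * s + r).

Lemma mobius_den_pos w s : 0 < w -> 0 <= s <= r -> Rmin 1 w * r <= (w - 1) * s + r.
Proof.
  intros Hw Hs. unfold Rmin. destruct (Rle_dec 1 w); nra.
Qed.

Lemma mobius_sub w a b : 0 < w -> 0 <= a <= r -> 0 <= b <= r ->
  mobius w b - mobius w a = w * r * r * (b - a) / (((w - 1) * a + r) * ((w - 1) * b + r)).
Proof.
  intros Hw Ha Hb. pose proof (mobius_den_pos w a Hw Ha). pose proof (mobius_den_pos w b Hw Hb).
  assert (0 < Rmin 1 w) by (unfold Rmin; destruct Rle_dec; lra).
  unfold mobius. field. split; nra.
Qed.

Lemma mobius_range w s : 0 < w -> 0 <= s <= r -> 0 <= mobius w s <= r.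
Proof.
  intros Hw Hs. pose proof (mobius_den_pos w s Hw Hs).
  assert (0 < Rmin 1 w) by (unfold Rmin; destruct Rle_dec; lra).
  unfold mobius. apply Rdiv_bounds; [nra|]. split.
  - rewrite Rmult_0_l. apply Rmult_le_pos; [apply Rmult_le_pos|]; lra.
  - assert (0 <= r * (r - s)) by (apply Rmult_le_pos; lra). nra.
Qed.

Lemma mobius_0 w : mobius w 0 = 0.
Proof. unfold mobius. rewrite Rmult_0_r. apply Rdiv_0_l. Qed.

Lemma mobius_r w : 0 < w -> mobius w r = r.
Proof. intros Hw. unfold mobius. field. nra. Qed.

Lemma mobius_inv w s : 0 < w -> 0 <= s <= r -> mobius (/ w) (mobius w s) = s.
Proof.
  intros Hw Hs. pose proof (mobius_den_pos w s Hw Hs).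
  assert (0 < Rmin 1 w) by (unfold Rmin; destruct Rle_dec; lra).
  assert (E : (/ w - 1) * mobius w s + r = r * r / ((w - 1) * s + r)).
  { unfold mobius. field. split; nra. }
  unfold mobius at 1. rewrite E. unfold mobius. field. split; nra.
Qed.

Lemma mobius_lipschitz w a b : 0 < w -> 0 <= a -> a <= b -> b <= r ->
  0 <= mobius w b - mobius w a <= (w + / w) * (b - a).
Proof.
  intros Hw Ha Hab Hb. rewrite mobius_sub by lra.
  pose proof (mobius_den_pos w a Hw ltac:(lra)) as Ea.
  pose proof (mobius_den_pos w b Hw ltac:(lra)) as Eb.
  set (A := (w - 1) * a + r) in *. set (B := (w - 1) * b + r) in *.
  assert (Hww : / w * w = 1) by (field; lra). pose proof (Rinv_0_lt_compat w Hw).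
  assert (Hden : w * r * r <= (w + / w) * (A * B)).
  { unfold Rmin in Ea, Eb. destruct (Rle_dec 1 w).
    - assert (r * r <= A * B) by (apply Rmult_le_compat; lra). nra.
    - assert (w * r * (w * r) <= A * B) by (apply Rmult_le_compat; nra). nra. }
  apply Rdiv_bounds.
  - unfold Rmin in Ea, Eb. destruct (Rle_dec 1 w); nra.
  - split; [|nra]. rewrite Rmult_0_l.
    apply Rmult_le_pos; [apply Rmult_le_pos; [apply Rmult_le_pos|]|]; lra.
Qed.

Lemma mobius_bilipschitz w : 0 < w -> bilipschitz_incr (w + / w) 0 r (mobius w).
Proof.
  intros Hw a b Ha Hab Hb. split; [|apply mobius_lipschitz; auto].
  pose proof (mobius_lipschitz w a b Hw Ha Hab Hb).
  destruct (mobius_range w a Hw ltac:(lra)). destruct (mobius_range w b Hw ltac:(lra)).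
  pose proof (mobius_lipschitz (/ w) (mobius w a) (mobius w b) (Rinv_0_lt_compat w Hw)) as L.
  rewrite Rinv_inv, !mobius_inv in L by lra. rewrite Rplus_comm. apply L; lra.
Qed.
End Mobius.

Section ScalingExtension.
Variable q : R.
Hypothesis Hq : 0 < q < 1.

Lemma pow_decr_S n : q ^ S n < q ^ n.
Proof. simpl. pose proof (pow_lt q n (proj1 Hq)). nra. Qed.

Lemma pow_decr m n : (m <= n)%nat -> q ^ n <= q ^ m.
Proof. intros H. induction H as [|k _ IH]; [lra|]. pose proof (pow_decr_S k). lra. Qed.

Lemma pow_le_1 n : q ^ n <= 1.
Proof. rewrite <- (pow_O q). apply pow_decr. lia. Qed.

Lemma layer_exists w : 0 < w <= 1 -> exists m, q ^ S m < w <= q ^ m.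
Proof.
  intros Hw. destruct (pow_lt_1_zero q ltac:(rewrite Rabs_right; lra) w ltac:(lra)) as [N HN].
  specialize (HN N (le_n N)). rewrite Rabs_right in HN by (apply Rle_ge, pow_le; lra).
  induction N as [|N IH]; [simpl in HN; lra|].
  destruct (Rle_dec w (q ^ N)); [exists N; split; auto|]. apply IH. lra.
Qed.

Lemma layer_unique w m n : q ^ S m < w <= q ^ m -> q ^ S n < w <= q ^ n -> m = n.
Proof.
  intros Hm Hn. destruct (Nat.lt_trichotomy m n) as [H|[H|H]]; auto.
  - pose proof (pow_decr (S m) n H). lra.
  - pose proof (pow_decr (S n) m H). lra.
Qed.

Definition layer (w : R) : nat := epsilon (inhabits O) (fun m => q ^ S m < w <= q ^ m).

Lemma layer_spec w : 0 < w <= 1 -> q ^ S (layer w) < w <= q ^ layer w.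
Proof.
  intros Hw. apply (epsilon_spec (inhabits O) (fun m => q ^ S m < w <= q ^ m)), layer_exists, Hw.
Qed.

Lemma layer_eq w m : q ^ S m < w <= q ^ m -> layer w = m.
Proof.
  intros H. pose proof (pow_lt q (S m) (proj1 Hq)). pose proof (pow_le_1 m).
  apply (layer_unique w); auto. apply layer_spec. lra.
Qed.

Variables (f : R -> R) (K : R).
Hypotheses (f_q : f q = q) (f_1 : f 1 = 1) (HK : 1 <= K) (Hf : bilipschitz_incr K q 1 f).

(* The extension of f to [0,1] that commutes with w |-> q * w. *)
Definition scaling_ext (w : R) : R :=
  if Rle_dec w 0 then 0 else q ^ layer w * f (w / q ^ layer w).

Lemma scaling_ext_nonpos w : w <= 0 -> scaling_ext w = 0.
Proof. intros H. unfold scaling_ext. destruct (Rle_dec w 0); [auto|lra]. Qed.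

Lemma scaling_ext_layer w m : q ^ S m <= w <= q ^ m -> scaling_ext w = q ^ m * f (w / q ^ m).
Proof.
  intros Hm. pose proof (pow_lt q m (proj1 Hq)). pose proof (pow_lt q (S m) (proj1 Hq)).
  unfold scaling_ext. destruct (Rle_dec w 0); [lra|].
  destruct (Req_dec w (q ^ S m)) as [->|Hne].
  - rewrite (layer_eq _ (S m)) by (pose proof (pow_decr_S (S m)); lra).
    rewrite Rdiv_diag, f_1 by lra. simpl. replace (q * q ^ m / q ^ m) with q by (field; lra).
    rewrite f_q. ring.
  - rewrite (layer_eq w m); auto. lra.
Qed.

Lemma scaling_ext_pow m : scaling_ext (q ^ m) = q ^ m.
Proof.
  pose proof (pow_lt q m (proj1 Hq)). pose proof (pow_decr_S m).
  rewrite (scaling_ext_layer _ m) by lra. rewrite Rdiv_diag, f_1 by lra. ring.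
Qed.

Lemma scaling_ext_scale w : 0 <= w <= 1 -> scaling_ext (q * w) = q * scaling_ext w.
Proof.
  intros Hw. destruct (Req_dec w 0) as [->|Hw0].
  { rewrite Rmult_0_r, !scaling_ext_nonpos by lra. ring. }
  pose proof (layer_spec w ltac:(lra)). set (m := layer w) in *.
  pose proof (pow_lt q m (proj1 Hq)).
  rewrite (scaling_ext_layer w m), (scaling_ext_layer (q * w) (S m)) by (simpl in *; split; nra).
  simpl. replace (q * w / (q * q ^ m)) with (w / q ^ m) by (field; lra). ring.
Qed.

Lemma scaling_ext_bilipschitz_layer m : bilipschitz_incr K (q ^ S m) (q ^ m) scaling_ext.
Proof.
  pose proof (pow_lt q m (proj1 Hq)).
  replace (q ^ S m) with (q ^ m * q) by (simpl; ring).
  rewrite <- (Rmult_1_r (q ^ m)) at 2.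
  apply bilipschitz_incr_ext with (fun x => q ^ m * f (x / q ^ m)).
  - intros x Hx. symmetry. apply scaling_ext_layer. rewrite Rmult_1_r in Hx. simpl. lra.
  - apply bilipschitz_incr_scale; auto.
Qed.

Lemma scaling_ext_bilipschitz_pow m : bilipschitz_incr K (q ^ m) 1 scaling_ext.
Proof.
  induction m as [|m IH].
  { intros a b Ha Hab Hb. simpl in Ha. replace b with a by lra. lra. }
  apply bilipschitz_incr_split with (q ^ m); auto. apply scaling_ext_bilipschitz_layer.
Qed.

Lemma scaling_ext_bilipschitz : bilipschitz_incr K 0 1 scaling_ext.
Proof.
  intros a b Ha Hab Hb. destruct (Req_dec b 0) as [->|Hb0].
  { replace a with 0 by lra. lra. }
  destruct (layer_exists b ltac:(lra)) as [n Hn].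
  destruct (Req_dec a 0) as [->|Ha0].
  - rewrite (scaling_ext_nonpos 0) by lra.
    destruct (scaling_ext_bilipschitz_pow (S n) (q ^ S n) b) as [A B]; try lra.
    rewrite scaling_ext_pow in A, B. pose proof (pow_lt q (S n) (proj1 Hq)). split; nra.
  - destruct (layer_exists a ltac:(lra)) as [m Hm].
    apply (scaling_ext_bilipschitz_pow (S m)); lra.
Qed.

Lemma scaling_ext_surj :
  (forall r, q <= r <= 1 -> exists t, q <= t <= 1 /\ f t = r) ->
  forall w, 0 <= w <= 1 -> exists v, 0 <= v <= 1 /\ scaling_ext v = w.
Proof.
  intros Hsurj w Hw. destruct (Req_dec w 0) as [->|Hw0].
  { exists 0. split; [lra|]. apply scaling_ext_nonpos. lra. }
  destruct (layer_exists w ltac:(lra)) as [m Hm]. pose proof (pow_lt q m (proj1 Hq)).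
  destruct (Hsurj (w / q ^ m)) as (t & Ht & Eft).
  { apply Rdiv_bounds; simpl in Hm; lra. }
  exists (q ^ m * t). pose proof (pow_le_1 m).
  assert (q ^ S m <= q ^ m * t <= q ^ m) by (simpl; split; nra).
  split; [nra|]. rewrite (scaling_ext_layer _ m) by auto.
  replace (q ^ m * t / q ^ m) with t by (field; lra). rewrite Eft. field. lra.
Qed.
End ScalingExtension.

Section TriangleWave.
Variable r : R.
Hypothesis Hr : 0 < r.

(* [tri y] is the distance from y to 2 r Z, attained at [tri_index y]. *)
Definition tri_index (y : R) : Z := up (y / (2 * r) - / 2).
Definition tri (y : R) : R := Rabs (y - 2 * r * IZR (tri_index y)).

Lemma tri_index_spec y : - r <= y - 2 * r * IZR (tri_index y) <= r.
Proof.
  unfold tri_index. destruct (archimed (y / (2 * r) - / 2)) as [A B].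
  replace y with (2 * r * (y / (2 * r))) at 1 3 by (field; lra). split; nra.
Qed.

Lemma tri_range y : 0 <= tri y <= r.
Proof. pose proof (tri_index_spec y). unfold tri. split; [apply Rabs_pos|apply Rabs_le; lra]. Qed.

Lemma tri_eq y j : Rabs (y - 2 * r * IZR j) <= r -> tri y = Rabs (y - 2 * r * IZR j).
Proof.
  intros Hj. pose proof (tri_index_spec y). unfold tri. set (z := tri_index y) in *.
  destruct (Z.eq_dec j z) as [->|Hne]; [reflexivity|].
  assert (Hjz : IZR (j - z) <= -1 \/ 1 <= IZR (j - z)).
  { destruct (Z.lt_ge_cases j z); [left|right]; apply IZR_le; lia. }
  rewrite minus_IZR in Hjz.
  destruct Hjz as [Hjz|Hjz].
  - assert (r * (IZR j - IZR z) <= - r) by nra.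
    rewrite (Rabs_right (y - 2 * r * IZR j)) in Hj |- * by nra. rewrite Rabs_left1 by nra. nra.
  - assert (r <= r * (IZR j - IZR z)) by nra.
    rewrite (Rabs_left1 (y - 2 * r * IZR j)) in Hj |- * by nra. rewrite Rabs_right by nra. nra.
Qed.

Lemma tri_min y j : tri y <= Rabs (y - 2 * r * IZR j).
Proof.
  destruct (Rle_dec (Rabs (y - 2 * r * IZR j)) r) as [H|H]; [rewrite (tri_eq y j H); lra|].
  pose proof (tri_range y). lra.
Qed.

Lemma tri_lipschitz : lipschitz_on (fun _ => True) 1 tri.
Proof.
  assert (H : forall a b, tri a <= Rabs (a - b) + tri b).
  { intros a b. eapply Rle_trans; [apply (tri_min a (tri_index b))|].
    unfold tri. replace (a - 2 * r * IZR (tri_index b))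
      with ((a - b) + (b - 2 * r * IZR (tri_index b))) by ring. apply Rabs_triang. }
  intros a b _ _. rewrite Rmult_1_l. apply Rabs_le.
  pose proof (H a b). pose proof (H b a). rewrite (Rabs_minus_sym b a) in *. split; lra.
Qed.

Lemma tri_id y : 0 <= y <= r -> tri y = y.
Proof.
  intros Hy. rewrite (tri_eq y 0); rewrite Rmult_0_r, Rminus_0_r, Rabs_right; lra.
Qed.

Lemma tri_shift y : tri (y + r) = r - tri y.
Proof.
  pose proof (tri_index_spec y). unfold tri at 2. set (z := tri_index y) in *.
  destruct (Rle_dec 0 (y - 2 * r * IZR z)).
  - rewrite (tri_eq _ (z + 1)); rewrite plus_IZR.
    + rewrite Rabs_left1, Rabs_right by lra. ring.
    + rewrite Rabs_left1; lra.
  - rewrite (tri_eq _ z).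
    + rewrite Rabs_right, Rabs_left1 by lra. ring.
    + rewrite Rabs_right; lra.
Qed.

Definition alt (n : nat) (s : R) : R := if Nat.even n then s else r - s.

Lemma alt_S n s : alt (S n) s = r - alt n s.
Proof. unfold alt. rewrite Nat.even_succ, <- Nat.negb_even. destruct (Nat.even n); simpl; ring. Qed.

Lemma alt_S_compl n s : alt (S n) (r - s) = alt n s.
Proof. rewrite alt_S. unfold alt. destruct (Nat.even n); ring. Qed.

Lemma alt_range n s : 0 <= s <= r -> 0 <= alt n s <= r.
Proof. intros H. unfold alt. destruct (Nat.even n); lra. Qed.

Lemma alt_dist n s s' : Rabs (alt n s - alt n s') = Rabs (s - s').
Proof.
  unfold alt. destruct (Nat.even n); [reflexivity|].
  replace (r - s - (r - s')) with (- (s - s')) by ring. apply Rabs_Ropp.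
Qed.

(* The centers of the ray parts of the basic neighbourhoods [Ybasic] of (s, oo). *)
Definition center (n : nat) (s : R) : R := (-1) ^ n * s - 2 * INR (Nat.div2 n) * r.

Lemma center_even k s : center (2 * k) s = s + 2 * r * - INR k.
Proof. unfold center. rewrite pow_1_even, Nat.div2_double. ring. Qed.

Lemma center_odd k s : center (S (2 * k)) s = - s + 2 * r * - INR k.
Proof. unfold center. rewrite pow_1_odd, Nat.div2_succ_double. ring. Qed.

Lemma center_bounds n s : 0 <= s <= r -> - INR n * r <= center n s <= - (INR n - 1) * r.
Proof.
  intros Hs. destruct (Nat.Even_or_Odd n) as [[k ->]|[k ->]].
  - rewrite center_even, mult_INR. simpl. lra.
  - rewrite Nat.add_1_r, center_odd, S_INR, mult_INR. simpl. lra.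
Qed.

Lemma center_dist n s s' : Rabs (center n s - center n s') = Rabs (s - s').
Proof.
  unfold center. replace ((-1) ^ n * s - 2 * INR (Nat.div2 n) * r - ((-1) ^ n * s' - 2 * INR (Nat.div2 n) * r))
    with ((-1) ^ n * (s - s')) by ring.
  rewrite Rabs_mult, pow_1_abs. ring.
Qed.

Lemma tri_center_shift n s i : 0 <= s <= r -> tri (center n s + INR i * r) = alt i s.
Proof.
  intros Hs. induction i as [|i IH].
  - rewrite Rmult_0_l, Rplus_0_r. unfold alt. simpl.
    destruct (Nat.Even_or_Odd n) as [[k ->]|[k ->]].
    + rewrite center_even, (tri_eq _ (- Z.of_nat k)); rewrite opp_IZR, <- INR_IZR_INZ;
        replace (s + 2 * r * - INR k - 2 * r * - INR k) with s by ring; rewrite Rabs_right; lra.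
    + rewrite Nat.add_1_r, center_odd, (tri_eq _ (- Z.of_nat k)); rewrite opp_IZR, <- INR_IZR_INZ;
        replace (- s + 2 * r * - INR k - 2 * r * - INR k) with (- s) by ring; rewrite Rabs_left1; lra.
  - rewrite S_INR, alt_S, <- IH, <- tri_shift. f_equal. ring.
Qed.

Lemma center_of_tri y : y <= 0 -> exists m, y = center m (tri y).
Proof.
  intros Hy. pose proof (tri_index_spec y). unfold tri. set (z := tri_index y) in *.
  assert (Hz : (z <= 0)%Z).
  { assert (H1 : IZR z < 1) by nra. apply lt_IZR in H1. lia. }
  assert (Ek : - INR (Z.to_nat (- z)) = IZR z).
  { rewrite INR_IZR_INZ, Z2Nat.id, opp_IZR by lia. ring. }
  destruct (Rle_dec 0 (y - 2 * r * IZR z)).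
  - exists (2 * Z.to_nat (- z))%nat. rewrite center_even, Ek, Rabs_right by lra. ring.
  - exists (S (2 * Z.to_nat (- z))). rewrite center_odd, Ek, Rabs_left1 by lra. ring.
Qed.
End TriangleWave.

Section Conjugacy.
Variables rho gamma delta alpha : R.
Hypotheses (Hrho : 0 < rho < 1) (Hdelta : 0 < delta) (Hgamma : 0 < gamma * rho + delta)
  (Halpha : alpha = - delta).

Local Notation F0 := (f0 rho gamma delta alpha).

Lemma f0_den_pos x : 0 <= x <= rho -> 0 < gamma * x + delta.
Proof.
  intros Hx. apply Rmult_lt_reg_l with rho; [lra|].
  replace (rho * (gamma * x + delta)) with ((rho - x) * delta + x * (gamma * rho + delta)) by ring.
  rewrite Rmult_0_r. destruct (Req_dec x 0) as [->|]; nra.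
Qed.

(* Differentiating [sig_conj] at s = 0 forces w0 ^ 2 = delta / (gamma * rho + delta). *)
Definition w0 : R := sqrt (delta / (gamma * rho + delta)).

Lemma w0_pos : 0 < w0.
Proof. apply sqrt_lt_R0, Rdiv_lt_0_compat; lra. Qed.

Lemma w0_sq : w0 * w0 * (gamma * rho + delta) = delta.
Proof. unfold w0. rewrite sqrt_sqrt; [field; lra|]. apply Rlt_le, Rdiv_lt_0_compat; lra. Qed.

Local Notation sig := (mobius rho w0).
Local Notation sig_inv := (mobius rho (/ w0)).

Lemma sig_conj s : 0 <= s <= rho -> sig (rho - s) = F0 (sig s).
Proof.
  intros Hs. pose proof w0_pos. pose proof w0_sq.
  pose proof (mobius_den_pos rho w0 s w0_pos Hs).
  pose proof (mobius_den_pos rho w0 (rho - s) w0_pos ltac:(lra)).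
  pose proof (f0_den_pos _ (mobius_range rho ltac:(lra) w0 s w0_pos Hs)).
  assert (0 < Rmin 1 w0) by (unfold Rmin; destruct Rle_dec; lra).
  assert (HE : 0 < (w0 - 1) * s + rho) by nra.
  unfold f0, mobius in *. rewrite Halpha. field_simplify_eq.
  - pose proof (f_equal (fun t => rho * s * (rho - s) * t) w0_sq). simpl in *. lra.
  - replace (gamma * (w0 * rho * s) + delta * ((w0 - 1) * s + rho))
      with (((w0 - 1) * s + rho) * (gamma * (w0 * rho * s / ((w0 - 1) * s + rho)) + delta))
      by (field; lra).
    repeat split; nra.
Qed.

Definition Kw : R := w0 + / w0.

Lemma Kw_ge_1 : 1 <= Kw.
Proof.
  pose proof w0_pos. pose proof (Rinv_0_lt_compat w0 w0_pos). unfold Kw.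
  destruct (Rle_dec 1 w0); [lra|]. assert (1 < / w0); [|lra].
  rewrite <- Rinv_1. apply Rinv_lt_contravar; lra.
Qed.

Lemma sig_bilipschitz : bilipschitz_incr Kw 0 rho sig.
Proof. apply mobius_bilipschitz, w0_pos. lra. Qed.

Lemma sig_inv_bilipschitz : bilipschitz_incr Kw 0 rho sig_inv.
Proof.
  replace Kw with (/ w0 + / / w0) by (unfold Kw; rewrite Rinv_inv; ring).
  apply mobius_bilipschitz; [lra|]. apply Rinv_0_lt_compat, w0_pos.
Qed.

Lemma sig_inv_sig s : 0 <= s <= rho -> sig_inv (sig s) = s.
Proof. apply mobius_inv; [lra|apply w0_pos]. Qed.

Lemma sig_sig_inv t : 0 <= t <= rho -> sig (sig_inv t) = t.
Proof.
  intros Ht. rewrite <- (Rinv_inv w0) at 1. apply mobius_inv; auto; [lra|].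
  apply Rinv_0_lt_compat, w0_pos.
Qed.

Lemma sig_range s : 0 <= s <= rho -> 0 <= sig s <= rho.
Proof. apply mobius_range; [lra|apply w0_pos]. Qed.

Lemma sig_inv_range t : 0 <= t <= rho -> 0 <= sig_inv t <= rho.
Proof. apply mobius_range; [lra|apply Rinv_0_lt_compat, w0_pos]. Qed.

Lemma f0_conj t : 0 <= t <= rho -> F0 t = sig (rho - sig_inv t).
Proof.
  intros Ht. pose proof (sig_inv_range t Ht).
  rewrite sig_conj, sig_sig_inv by lra. reflexivity.
Qed.

Lemma f0_range t : 0 <= t <= rho -> 0 <= F0 t <= rho.
Proof. intros Ht. pose proof (sig_inv_range t Ht). rewrite f0_conj by auto. apply sig_range. lra. Qed.

Lemma f0_invol t : 0 <= t <= rho -> F0 (F0 t) = t.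
Proof.
  intros Ht. pose proof (sig_inv_range t Ht).
  rewrite (f0_conj t), <- sig_conj by lra. rewrite <- (sig_sig_inv t) at 2 by auto. f_equal. ring.
Qed.

Lemma f0_lipschitz : lipschitz_on (fun t => 0 <= t <= rho) (Kw * Kw) F0.
Proof.
  pose proof Kw_ge_1.
  apply lipschitz_on_ext with (fun t => sig (rho - sig_inv t)); [intros; symmetry; apply f0_conj; auto|].
  apply lipschitz_on_comp with (E := fun s => 0 <= s <= rho); [lra| | |].
  - intros t Ht. pose proof (sig_inv_range t Ht). lra.
  - replace Kw with (1 * Kw) by ring.
    apply lipschitz_on_comp with (E := fun s => 0 <= s <= rho); [lra|apply sig_inv_range| |].
    + apply bilipschitz_incr_lipschitz; [lra|apply sig_inv_bilipschitz].
    + intros a b _ _. replace (rho - a - (rho - b)) with (- (a - b)) by ring. rewrite Rabs_Ropp. lra.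
  - apply bilipschitz_incr_lipschitz; [lra|apply sig_bilipschitz].
Qed.

Local Notation f := (fmap rho gamma delta alpha).

Lemma f_le x : x <= rho -> f x = F0 x.
Proof. intros H. unfold fmap. destruct (Rle_dec x rho); [reflexivity|lra]. Qed.

Lemma f_gt x : rho < x -> f x = (x - rho) / (1 - rho).
Proof. intros H. unfold fmap. destruct (Rle_dec x rho); [lra|reflexivity]. Qed.

Lemma f0_rho : F0 rho = 0.
Proof. unfold f0. rewrite Rminus_diag, Rdiv_0_l. reflexivity. Qed.

Lemma f_range x : 0 <= x <= 1 -> 0 <= f x <= 1.
Proof.
  intros Hx. destruct (Rle_dec x rho).
  - rewrite f_le by auto. pose proof (f0_range x ltac:(lra)). lra.
  - rewrite f_gt by lra. apply Rdiv_bounds; lra.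
Qed.

Lemma f_lipschitz : lipschitz_on (fun x => 0 <= x <= 1) (Kw * Kw + / (1 - rho)) f.
Proof.
  pose proof (Rinv_0_lt_compat (1 - rho) ltac:(lra)).
  apply lipschitz_on_glue with rho; [lra| |].
  - apply lipschitz_on_le with (Kw * Kw); [lra|].
    apply lipschitz_on_ext with F0; [intros x Hx; symmetry; apply f_le; tauto|].
    intros a b Ha Hb. apply f0_lipschitz; lra.
  - apply lipschitz_on_le with (/ (1 - rho)); [pose proof Kw_ge_1; nra|].
    apply lipschitz_on_ext with (fun x => / (1 - rho) * (x - rho)).
    { intros x Hx. destruct (Req_dec x rho) as [->|].
      - rewrite f_le, f0_rho by lra. ring.
      - rewrite f_gt by lra. unfold Rdiv. ring. }
    intros a b _ _. replace (/ (1 - rho) * (a - rho) - / (1 - rho) * (b - rho))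
      with (/ (1 - rho) * (a - b)) by ring.
    rewrite Rabs_mult, Rabs_right by lra. lra.
Qed.

Local Notation q := (1 - rho).

Definition sig_top (r : R) : R := 1 - sig (1 - r).
Definition sig_ext : R -> R := scaling_ext q sig_top.

Lemma sig_top_bilipschitz : bilipschitz_incr Kw q 1 sig_top.
Proof.
  pose proof (bilipschitz_incr_reflect Kw 0 rho sig 1 sig_bilipschitz) as H.
  rewrite Rminus_0_r in H. exact H.
Qed.

Lemma sig_top_q : sig_top q = q.
Proof. unfold sig_top. replace (1 - (1 - rho)) with rho by ring. rewrite mobius_r; [ring|lra|apply w0_pos]. Qed.

Lemma sig_top_1 : sig_top 1 = 1.
Proof. unfold sig_top. rewrite Rminus_diag, mobius_0. ring. Qed.

Lemma sig_ext_bilipschitz : bilipschitz_incr Kw 0 1 sig_ext.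
Proof. apply scaling_ext_bilipschitz; [lra|apply sig_top_q|apply sig_top_1|apply Kw_ge_1|apply sig_top_bilipschitz]. Qed.

Lemma sig_ext_surj w : 0 <= w <= 1 -> exists v, 0 <= v <= 1 /\ sig_ext v = w.
Proof.
  apply scaling_ext_surj; [lra|apply sig_top_q|apply sig_top_1|].
  intros r Hr. pose proof (sig_inv_range (1 - r) ltac:(lra)).
  exists (1 - sig_inv (1 - r)). split; [lra|].
  unfold sig_top. replace (1 - (1 - sig_inv (1 - r))) with (sig_inv (1 - r)) by ring.
  rewrite sig_sig_inv by lra. ring.
Qed.

Definition pi (y : R) : R := if Rle_dec y rho then sig (tri rho y) else 1 - sig_ext (1 - y).

Lemma pi_le y : y <= rho -> pi y = sig (tri rho y).
Proof. intros H. unfold pi. destruct (Rle_dec y rho); [reflexivity|lra]. Qed.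

Lemma pi_unit_interval y : 0 <= y <= 1 -> pi y = 1 - sig_ext (1 - y).
Proof.
  intros Hy. unfold pi. destruct (Rle_dec y rho); [|reflexivity].
  unfold sig_ext. rewrite (scaling_ext_layer q ltac:(lra) sig_top sig_top_q sig_top_1 (1 - y) 0) by (simpl; lra).
  rewrite tri_id by lra. unfold sig_top. simpl. f_equal. rewrite Rdiv_1_r. ring_simplify.
  f_equal. ring.
Qed.

Lemma pi_bilipschitz : bilipschitz_incr Kw 0 1 pi.
Proof.
  apply bilipschitz_incr_ext with (fun y => 1 - sig_ext (1 - y)); [intros; symmetry; apply pi_unit_interval; auto|].
  pose proof (bilipschitz_incr_reflect Kw 0 1 sig_ext 1 sig_ext_bilipschitz) as H.
  rewrite Rminus_0_r, Rminus_diag in H. exact H.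
Qed.

Lemma pi_lipschitz : lipschitz_on (fun y => y <= 1) Kw pi.
Proof.
  pose proof Kw_ge_1. apply lipschitz_on_glue with rho; [lra| |].
  - apply lipschitz_on_ext with (fun y => sig (tri rho y)); [intros; symmetry; apply pi_le; tauto|].
    rewrite <- (Rmult_1_r Kw).
    apply lipschitz_on_comp with (E := fun s => 0 <= s <= rho); [lra|intros; apply tri_range; lra| |].
    + apply lipschitz_on_weaken with (fun _ => True); auto. apply tri_lipschitz. lra.
    + apply bilipschitz_incr_lipschitz; [lra|apply sig_bilipschitz].
  - apply lipschitz_on_weaken with (fun y => 0 <= y <= 1); [intros; lra|].
    apply bilipschitz_incr_lipschitz; [lra|apply pi_bilipschitz].
Qed.

Lemma pi_1 : pi 1 = 1.
Proof. rewrite pi_unit_interval by lra. unfold sig_ext. rewrite Rminus_diag, scaling_ext_nonpos by lra. ring. Qed.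

Lemma pi_rho : pi rho = rho.
Proof. rewrite pi_le, tri_id by lra. apply mobius_r; [lra|apply w0_pos]. Qed.

Lemma pi_le_range y : y <= rho -> 0 <= pi y <= rho.
Proof. intros H. rewrite pi_le by auto. apply sig_range, tri_range. lra. Qed.

Lemma pi_gt y : rho < y <= 1 -> rho < pi y <= 1.
Proof.
  intros Hy. pose proof Kw_ge_1.
  destruct (pi_bilipschitz rho y) as [A _]; try lra.
  destruct (pi_bilipschitz y 1) as [B _]; try lra.
  rewrite pi_rho in A. rewrite pi_1 in B. split; nra.
Qed.

Lemma pi_range y : y <= 1 -> 0 <= pi y <= 1.
Proof.
  intros Hy. destruct (Rle_dec y rho) as [Hle|Hgt]; [pose proof (pi_le_range y Hle)|pose proof (pi_gt y)]; lra.
Qed.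

Lemma pi_gt_inv y : y <= 1 -> rho < pi y -> rho < y.
Proof. intros H1 H2. destruct (Rle_dec y rho) as [Hle|]; [|lra]. pose proof (pi_le_range y Hle). lra. Qed.

Lemma pi_inj a b : 0 <= a <= 1 -> 0 <= b <= 1 -> pi a = pi b -> a = b.
Proof.
  intros Ha Hb E. pose proof Kw_ge_1.
  destruct (bilipschitz_incr_abs Kw 0 1 pi ltac:(lra) pi_bilipschitz a b Ha Hb) as [_ L].
  rewrite E, Rminus_diag, Rabs_R0, Rmult_0_r in L. pose proof (Rabs_pos (a - b)).
  destruct (Req_dec a b); [auto|]. exfalso. apply (Rabs_no_R0 (a - b)); lra.
Qed.

Lemma pi_surj v : rho < v <= 1 -> exists a, rho < a <= 1 /\ pi a = v.
Proof.
  intros Hv. destruct (sig_ext_surj (1 - v)) as (u & Hu & Eu); [lra|].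
  assert (Ev : pi (1 - u) = v).
  { rewrite pi_unit_interval by lra. replace (1 - (1 - u)) with u by ring. rewrite Eu. ring. }
  exists (1 - u). split; [|auto]. split; [apply pi_gt_inv; lra|lra].
Qed.

Definition g_ray (y : R) : R := if Rle_dec y rho then y - rho else (y - rho) / (1 - rho).
Definition g_ray_inv (y : R) : R := if Rle_dec y 0 then y + rho else rho + q * y.
Definition g_ray_back (n : nat) (y : R) : R := Nat.iter n g_ray_inv y.

Lemma g_ray_lt x y : x < y -> g_ray x < g_ray y.
Proof.
  intros H. unfold g_ray. destruct (Rle_dec x rho), (Rle_dec y rho); try lra.
  - pose proof (Rdiv_lt_0_compat (y - rho) (1 - rho) ltac:(lra) ltac:(lra)). lra.
  - apply Rmult_lt_compat_r; [apply Rinv_0_lt_compat|]; lra.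
Qed.

Lemma g_ray_1 : g_ray 1 = 1.
Proof. unfold g_ray. destruct (Rle_dec 1 rho); [lra|]. field. lra. Qed.

Lemma g_ray_inv_le_1 y : y <= 1 -> g_ray_inv y <= 1.
Proof. intros H. unfold g_ray_inv. destruct (Rle_dec y 0); nra. Qed.

Lemma g_ray_le_1 y : y <= 1 -> g_ray y <= 1.
Proof.
  intros H. unfold g_ray. destruct (Rle_dec y rho); [lra|].
  pose proof (Rdiv_bounds (y - rho) q 0 1 ltac:(lra) ltac:(lra)). lra.
Qed.

Lemma g_ray_inv_gg y : y <= 1 -> g_ray_inv (g_ray y) = y.
Proof.
  intros H. unfold g_ray_inv, g_ray. destruct (Rle_dec y rho).
  - destruct (Rle_dec (y - rho) 0); [ring|lra].
  - destruct (Rle_dec ((y - rho) / (1 - rho)) 0) as [Hc|].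
    + exfalso. assert (0 < (y - rho) / (1 - rho)) by (apply Rdiv_lt_0_compat; lra). lra.
    + field. lra.
Qed.

Lemma g_ray_inv_incr a b : a <= b -> q * (b - a) <= g_ray_inv b - g_ray_inv a <= b - a.
Proof. intros H. unfold g_ray_inv. destruct (Rle_dec a 0), (Rle_dec b 0); split; nra. Qed.

Lemma g_ray_back_S n y : g_ray_back (S n) y = g_ray_inv (g_ray_back n y).
Proof. reflexivity. Qed.

Lemma g_ray_back_le_1 n y : y <= 1 -> g_ray_back n y <= 1.
Proof. intros H. induction n; simpl; auto. apply g_ray_inv_le_1. auto. Qed.

Lemma g_ray_back_dist n a b :
  q ^ n * Rabs (a - b) <= Rabs (g_ray_back n a - g_ray_back n b) <= Rabs (a - b).
Proof.
  revert a b. assert (H1 : forall a b, q * Rabs (a - b) <= Rabs (g_ray_inv a - g_ray_inv b) <= Rabs (a - b)).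
  { intros a b. destruct (Rle_dec a b).
    - destruct (g_ray_inv_incr a b r). rewrite !Rabs_left1 by nra. split; nra.
    - destruct (g_ray_inv_incr b a ltac:(lra)). rewrite !Rabs_right by nra. split; nra. }
  induction n as [|n IH]; intros a b; simpl; [lra|].
  destruct (IH a b). destruct (H1 (g_ray_back n a) (g_ray_back n b)).
  split; [|lra]. rewrite Rmult_assoc. eapply Rle_trans; [|eauto].
  apply Rmult_le_compat_l; lra.
Qed.

Lemma g_ray_back_inj n a b : g_ray_back n a = g_ray_back n b -> a = b.
Proof.
  intros E. destruct (g_ray_back_dist n a b) as [D _]. rewrite E, Rminus_diag, Rabs_R0 in D.
  pose proof (pow_lt q n ltac:(lra)). pose proof (Rabs_pos (a - b)).
  destruct (Req_dec a b) as [|Hne]; [auto|]. exfalso. apply (Rabs_no_R0 (a - b)); nra.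
Qed.

Lemma g_ray_back_linear i y : y + INR i * rho <= rho -> g_ray_back i y = y + INR i * rho.
Proof.
  induction i as [|i IH]; intros H; [simpl; ring|].
  rewrite S_INR in *. rewrite g_ray_back_S, IH by lra.
  unfold g_ray_inv. destruct (Rle_dec (y + INR i * rho) 0); [ring|lra].
Qed.

Lemma g_ray_back_unit n y : 0 < y <= 1 -> g_ray_back n y = 1 - q ^ n * (1 - y).
Proof.
  intros Hy. induction n as [|n IH]; [simpl; ring|].
  assert (q ^ n * (1 - y) <= 1 - y).
  { pose proof (pow_le_1 q ltac:(lra) n) as Hn. apply Rmult_le_compat_r with (r := 1 - y) in Hn; lra. }
  rewrite g_ray_back_S, IH. unfold g_ray_inv. destruct (Rle_dec _ 0); [lra|]. simpl. ring.
Qed.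

Lemma g_ray_back_add m n y : g_ray_back (m + n) y = g_ray_back m (g_ray_back n y).
Proof. apply Nat.iter_add. Qed.

Lemma g_ray_back_eventually_pos y : exists j, 0 < g_ray_back j y.
Proof.
  destruct (INR_unbounded (- y / rho)) as [n Hn].
  assert (Hn' : - INR n * rho < y).
  { apply Rmult_lt_compat_r with (r := rho) in Hn; [|lra].
    replace (- y / rho * rho) with (- y) in Hn by (field; lra). lra. }
  clear Hn. revert y Hn'. induction n as [|n IH]; intros y Hy.
  - exists O. simpl in *. lra.
  - destruct (Rle_dec y 0) as [Hle|]; [|exists O; simpl; lra].
    destruct (IH (g_ray_inv y)) as [j Hj].
    + unfold g_ray_inv. destruct (Rle_dec y 0); [|lra]. rewrite S_INR in Hy. lra.
    + exists (j + 1)%nat. rewrite g_ray_back_add. exact Hj.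
Qed.

Lemma g_ray_back_eventually y : exists j, rho < g_ray_back j y.
Proof.
  destruct (g_ray_back_eventually_pos y) as [j Hj]. exists (1 + j)%nat. rewrite g_ray_back_add, g_ray_back_S.
  simpl. unfold g_ray_inv. destruct (Rle_dec (g_ray_back j y) 0); [lra|]. nra.
Qed.

Lemma g_ray_back_cv y : y <= 1 -> Un_cv (fun n => g_ray_back n y) 1.
Proof.
  intros Hy. destruct (g_ray_back_eventually_pos y) as [j Hj]. pose proof (g_ray_back_le_1 j y Hy).
  apply CV_shift with j.
  apply Un_cv_ext with (fun n => 1 - q ^ n * (1 - g_ray_back j y)).
  { intros n. rewrite g_ray_back_add, (g_ray_back_unit n) by lra. reflexivity. }
  intros eps Heps. destruct (pow_lt_1_zero q ltac:(rewrite Rabs_right; lra) eps Heps) as [N HN].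
  exists N. intros n Hn. specialize (HN n Hn). unfold R_dist.
  pose proof (pow_lt q n ltac:(lra)). rewrite Rabs_right in HN by lra.
  replace (1 - q ^ n * (1 - g_ray_back j y) - 1) with (- (q ^ n * (1 - g_ray_back j y))) by ring.
  rewrite Rabs_Ropp, Rabs_right by nra. nra.
Qed.

Lemma pi_semiconj y : y <= 1 -> f (pi (g_ray_inv y)) = pi y.
Proof.
  intros Hy. unfold g_ray_inv. destruct (Rle_dec y 0).
  - pose proof (tri_range rho ltac:(lra) y).
    rewrite (pi_le (y + rho)), tri_shift, f_le by (try apply sig_range; lra).
    rewrite <- sig_conj by lra. rewrite pi_le by lra. f_equal. ring.
  - assert (Hin : rho < rho + q * y <= 1) by nra.
    pose proof (pi_gt _ Hin). rewrite f_gt by lra.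
    rewrite !pi_unit_interval by lra. replace (1 - (rho + q * y)) with (q * (1 - y)) by ring.
    unfold sig_ext. rewrite scaling_ext_scale; [field; lra|lra|apply sig_top_q|apply sig_top_1|lra].
Qed.

Lemma g_ray_back_surj n y : y <= 1 -> exists z, z <= 1 /\ g_ray_back n z = y.
Proof.
  revert y. induction n as [|n IH]; intros y Hy; [exists y; auto|].
  destruct (IH y Hy) as (z & Hz & <-). exists (g_ray z). split; [apply g_ray_le_1; auto|].
  unfold g_ray_back. rewrite Nat.iter_succ_r. fold (g_ray_back n (g_ray_inv (g_ray z))). rewrite g_ray_inv_gg; auto.
Qed.

Definition hinv (p : R + R) : nat -> R :=
  match p with
  | inl y => fun n => pi (g_ray_back n y)
  | inr s => fun n => sig (alt rho n s)
  end.

Local Notation XX := (Xt rho gamma delta alpha).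
Local Notation FT := (ftilde rho gamma delta alpha).

Lemma hinv_in_X p : Yset rho p -> XX (hinv p).
Proof.
  destruct p as [y|s]; simpl; intros Hp n.
  - pose proof (g_ray_back_le_1 n y Hp). split; [apply pi_range; auto|].
    rewrite g_ray_back_S. apply pi_semiconj. auto.
  - pose proof (alt_range rho n s Hp) as Ha. split; [pose proof (sig_range _ Ha); lra|].
    rewrite alt_S, f_le by (apply sig_range; lra).
    rewrite <- sig_conj by lra. f_equal. ring.
Qed.

Lemma hinv_conj p : Yset rho p -> hinv (gmap rho p) = FT (hinv p).
Proof.
  intros Hp. extensionality n. destruct p as [y|s]; simpl in Hp.
  - change (gmap rho (inl y)) with (inl (B := R) (g_ray y)).
    destruct n as [|n]; unfold hinv, ftilde.
    + rewrite <- (g_ray_inv_gg y Hp) at 2. symmetry. apply pi_semiconj, g_ray_le_1, Hp.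
    + unfold g_ray_back. rewrite Nat.iter_succ_r. fold (g_ray_back n (g_ray_inv (g_ray y))). rewrite g_ray_inv_gg; auto.
  - destruct n as [|n]; unfold hinv, ftilde, gmap.
    + unfold alt. simpl Nat.even. cbv iota beta.
      rewrite f_le by (apply sig_range; lra). apply sig_conj. auto.
    + rewrite alt_S_compl. reflexivity.
Qed.

Lemma f_gt_inv t : 0 <= t <= 1 -> rho < f t -> rho < t.
Proof.
  intros Ht H. destruct (Rle_dec t rho); [|lra].
  rewrite f_le in H by auto. pose proof (f0_range t ltac:(lra)). lra.
Qed.

Lemma Xt_eq_of_coord_gt u x j : XX u -> XX x -> u j = x j -> rho < x j -> u = x.
Proof.
  intros Hu Hx Ej Gj.
  assert (Above : forall i, u (i + j)%nat = x (i + j)%nat /\ rho < x (i + j)%nat).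
  { induction i as [|i [E G]]; [auto|]. simpl.
    destruct (Hu (i + j)%nat) as [_ Fu]. destruct (Hx (i + j)%nat) as [_ Fx].
    destruct (Hu (S (i + j))) as [Ru _]. destruct (Hx (S (i + j))) as [Rx _].
    assert (G' : rho < x (S (i + j))) by (apply f_gt_inv; auto; lra).
    assert (rho < u (S (i + j))) by (apply f_gt_inv; auto; lra).
    rewrite f_gt in Fu, Fx by auto. split; auto.
    rewrite E, <- Fx in Fu. apply Rmult_eq_reg_r with (/ (1 - rho)); [lra|].
    apply Rinv_neq_0_compat. lra. }
  assert (Below : forall d, (d <= j)%nat -> u (j - d)%nat = x (j - d)%nat).
  { induction d as [|d IH]; intros Hd; [rewrite Nat.sub_0_r; auto|].
    specialize (IH ltac:(lia)). replace (j - d)%nat with (S (j - S d)) in IH by lia.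
    rewrite <- (proj2 (Hu (j - S d)%nat)), <- (proj2 (Hx (j - S d)%nat)), IH. reflexivity. }
  extensionality n. destruct (le_lt_dec n j).
  - replace n with (j - (j - n))%nat by lia. apply Below. lia.
  - replace n with ((n - j) + j)%nat by lia. apply Above.
Qed.

Lemma hinv_surj x : XX x -> exists p, Yset rho p /\ hinv p = x.
Proof.
  intros Hx. destruct (classic (exists j, rho < x j)) as [[j Hj]|Hle].
  - destruct (pi_surj (x j)) as (a & Ha & Ea); [pose proof (proj1 (Hx j)); lra|].
    destruct (g_ray_back_surj j a ltac:(lra)) as (y & Hy & Ey).
    exists (inl y). split; [exact Hy|].
    apply Xt_eq_of_coord_gt with j; [apply hinv_in_X; exact Hy|auto|simpl; congruence|auto].
  - assert (Hle' : forall n, 0 <= x n <= rho).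
    { intros n. pose proof (proj1 (Hx n)). destruct (Rle_dec (x n) rho); [lra|].
      exfalso. apply Hle. exists n. lra. }
    exists (inr (sig_inv (x O))). split; [apply sig_inv_range, Hle'|].
    pose proof (sig_inv_range _ (Hle' O)).
    extensionality n. simpl. induction n as [|n IH].
    + apply sig_sig_inv, Hle'.
    + rewrite alt_S, sig_conj, IH by (apply alt_range; auto).
      rewrite <- (proj2 (Hx n)), f_le by apply Hle'. apply f0_invol, Hle'.
Qed.

Lemma hinv_inr_le s n : 0 <= s <= rho -> hinv (inr s) n <= rho.
Proof. intros Hs. apply sig_range, alt_range; auto. Qed.

Lemma hinv_inl_eventually_gt y : y <= 1 -> exists j, rho < hinv (inl y) j.
Proof.
  intros Hy. destruct (g_ray_back_eventually y) as [j Hj]. exists j.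
  apply pi_gt. split; [auto|apply g_ray_back_le_1; auto].
Qed.

Lemma hinv_inj p p' : Yset rho p -> Yset rho p' -> hinv p = hinv p' -> p = p'.
Proof.
  intros Hp Hp' E. destruct p as [y|s], p' as [y'|s']; simpl in Hp, Hp'.
  - destruct (hinv_inl_eventually_gt y Hp) as [j Hj].
    assert (Ej : pi (g_ray_back j y) = pi (g_ray_back j y')) by (change (hinv (inl y) j = hinv (inl y') j); congruence).
    simpl in Hj. pose proof (g_ray_back_le_1 j y Hp). pose proof (g_ray_back_le_1 j y' Hp').
    assert (rho < g_ray_back j y) by (apply pi_gt_inv; auto).
    assert (rho < g_ray_back j y') by (apply pi_gt_inv; [auto|congruence]).
    apply pi_inj, g_ray_back_inj in Ej; [congruence|lra|lra].
  - exfalso. destruct (hinv_inl_eventually_gt y Hp) as [j Hj].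
    rewrite E in Hj. pose proof (hinv_inr_le s' j Hp'). lra.
  - exfalso. destruct (hinv_inl_eventually_gt y' Hp') as [j Hj].
    rewrite <- E in Hj. pose proof (hinv_inr_le s j Hp). lra.
  - assert (E0 : sig s = sig s') by (change (hinv (inr s) O = hinv (inr s') O); congruence).
    rewrite <- (sig_inv_sig s), <- (sig_inv_sig s'), E0 by auto. reflexivity.
Qed.

Lemma hinv_inl_close y eps : y <= 1 -> 0 < eps -> exists e, 0 < e /\
  forall y', y' <= 1 -> Rabs (y' - y) < e -> forall n, Rabs (hinv (inl y') n - hinv (inl y) n) < eps.
Proof.
  intros Hy Heps. pose proof Kw_ge_1.
  exists (eps / Kw). split; [apply Rdiv_lt_0_compat; lra|]. intros y' Hy' Hd n. simpl.
  eapply Rle_lt_trans; [apply pi_lipschitz; apply g_ray_back_le_1; auto|].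
  destruct (g_ray_back_dist n y' y) as [_ D].
  apply Rle_lt_trans with (Kw * Rabs (y' - y)); [apply Rmult_le_compat_l; lra|].
  apply Rmult_lt_of_lt_div; lra.
Qed.

Lemma hinv_inr_close s eps M : 0 <= s <= rho -> 0 < eps -> exists e, 0 < e /\ exists N : nat,
  forall p, Ybasic rho s e N p -> forall n, (n <= M)%nat -> Rabs (hinv p n - hinv (inr s) n) < eps.
Proof.
  intros Hs Heps. pose proof Kw_ge_1.
  assert (0 < eps / Kw) by (apply Rdiv_lt_0_compat; lra).
  exists (Rmin rho (eps / Kw)). split; [apply Rmin_glb_lt; lra|]. exists M.
  pose proof (Rmin_l rho (eps / Kw)). pose proof (Rmin_r rho (eps / Kw)).
  assert (sig_close : forall a b, 0 <= a <= rho -> 0 <= b <= rho -> Rabs (a - b) < Rmin rho (eps / Kw) ->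
    Rabs (sig a - sig b) < eps).
  { intros a b Ha Hb Hab.
    eapply Rle_lt_trans; [apply (bilipschitz_incr_lipschitz Kw 0 rho); auto; [lra|apply sig_bilipschitz]|].
    apply Rmult_lt_of_lt_div; lra. }
  intros p Hp n Hn. destruct p as [y'|s']; simpl in Hp |- *.
  - destruct Hp as (Hy' & m & Hm & Hc). fold (center rho m s) in Hc.
    pose proof (center_bounds rho m s Hs). apply le_INR in Hm. rewrite S_INR in Hm.
    pose proof (le_INR _ _ Hn). apply Rabs_def2 in Hc as [Hc1 Hc2].
    assert (Hlin : y' + INR n * rho <= rho) by nra.
    rewrite g_ray_back_linear, pi_le by auto. rewrite <- (tri_center_shift rho ltac:(lra) m s n Hs).
    apply sig_close; try (apply tri_range; lra).
    eapply Rle_lt_trans; [apply tri_lipschitz; auto; lra|].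
    replace (y' + INR n * rho - (center rho m s + INR n * rho)) with (y' - center rho m s) by ring.
    rewrite Rmult_1_l. apply Rabs_def1; lra.
  - destruct Hp as [Hs' Hd]. apply sig_close; try (apply alt_range; auto).
    rewrite alt_dist. auto.
Qed.

Lemma hinv_inl_separated y e : y <= 1 -> 0 < e -> exists eta, 0 < eta /\ exists M : nat,
  forall p, Yset rho p -> (forall n, (n <= M)%nat -> Rabs (hinv p n - hinv (inl y) n) < eta) ->
  exists y', p = inl y' /\ Rabs (y' - y) < e.
Proof.
  intros Hy He. destruct (g_ray_back_eventually y) as [j Hj]. pose proof (g_ray_back_le_1 j y Hy) as Hj1.
  pose proof (pi_gt _ (conj Hj Hj1)). pose proof Kw_ge_1. pose proof (pow_lt q j ltac:(lra)).
  assert (0 < e * q ^ j / Kw) by (apply Rdiv_lt_0_compat; nra).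
  set (eta := Rmin (pi (g_ray_back j y) - rho) (e * q ^ j / Kw)).
  assert (eta <= pi (g_ray_back j y) - rho) by apply Rmin_l.
  assert (eta <= e * q ^ j / Kw) by apply Rmin_r.
  exists eta. split; [apply Rmin_glb_lt; lra|]. exists j.
  intros p Hp Hc. specialize (Hc j (le_n j)). apply Rabs_def2 in Hc as [Hc1 Hc2].
  destruct p as [y'|s']; simpl in Hp, Hc1, Hc2.
  - exists y'. split; [reflexivity|]. pose proof (g_ray_back_le_1 j y' Hp).
    assert (rho < g_ray_back j y') by (apply pi_gt_inv; auto; lra).
    destruct (bilipschitz_incr_abs Kw 0 1 pi ltac:(lra) pi_bilipschitz (g_ray_back j y') (g_ray_back j y))
      as [_ L]; try lra.
    destruct (g_ray_back_dist j y' y) as [D _].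
    assert (Kw * Rabs (pi (g_ray_back j y') - pi (g_ray_back j y)) < e * q ^ j).
    { apply Rmult_lt_of_lt_div; [lra|]. apply Rabs_def1; lra. }
    apply Rmult_lt_reg_l with (q ^ j); nra.
  - exfalso. pose proof (sig_range _ (alt_range rho j s' Hp)). lra.
Qed.

Lemma pi_gt_1_sub_q2 z : 1 - q * q < z <= 1 -> 1 - q * q < pi z.
Proof.
  intros Hz. pose proof Kw_ge_1.
  destruct (pi_bilipschitz (1 - q * q) z) as [A _]; try nra.
  rewrite (pi_unit_interval (1 - q * q)) in A by nra. replace (1 - (1 - q * q)) with (q ^ 2) in A by ring.
  unfold sig_ext in A. rewrite scaling_ext_pow in A; [|lra|apply sig_top_q|apply sig_top_1]. nra.
Qed.

(* Had the backward orbit entered (0,1] by step M, two steps later its pi-value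
   would exceed 1 - q * q. *)
Lemma g_ray_back_linear_of_pi_bounded y M : y <= 1 ->
  (forall i, (i <= M)%nat -> pi (g_ray_back (2 + i) y) <= 1 - q * q) -> y + INR M * rho <= 0.
Proof.
  intros Hy Hb.
  assert (Hneg : forall i, (i <= M)%nat -> g_ray_back i y <= 0).
  { intros i Hi. destruct (Rle_dec (g_ray_back i y) 0) as [|Hpos]; [auto|exfalso].
    apply Rnot_le_lt in Hpos. pose proof (g_ray_back_le_1 i y Hy). specialize (Hb i Hi).
    assert (0 < q * q * g_ray_back i y) by (apply Rmult_lt_0_compat; nra).
    rewrite g_ray_back_add, (g_ray_back_unit 2) in Hb by lra.
    assert (1 - q * q < 1 - q ^ 2 * (1 - g_ray_back i y)) by (simpl; nra).
    pose proof (pi_gt_1_sub_q2 (1 - q ^ 2 * (1 - g_ray_back i y))). simpl in *. nra. }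
  assert (Hlin : forall i, (i <= M)%nat -> g_ray_back i y = y + INR i * rho).
  { induction i as [|i IH]; intros Hi; [simpl; ring|].
    rewrite g_ray_back_S, IH by lia. pose proof (Hneg i ltac:(lia)) as Hi'. rewrite IH in Hi' by lia.
    unfold g_ray_inv. destruct (Rle_dec _ 0); [|lra]. rewrite S_INR. ring. }
  rewrite <- Hlin by lia. apply Hneg. lia.
Qed.

Lemma hinv_inr_separated s e N : 0 <= s <= rho -> 0 < e -> exists eta, 0 < eta /\ exists M : nat,
  forall p, Yset rho p -> (forall n, (n <= M)%nat -> Rabs (hinv p n - hinv (inr s) n) < eta) ->
  Ybasic rho s e N p.
Proof.
  intros Hs He. pose proof Kw_ge_1. assert (0 < e / Kw) by (apply Rdiv_lt_0_compat; lra).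
  set (eta := Rmin (q * rho) (e / Kw)).
  assert (eta <= q * rho) by apply Rmin_l. assert (eta <= e / Kw) by apply Rmin_r.
  exists eta. split; [apply Rmin_glb_lt; nra|]. exists (N + 3)%nat.
  assert (sig_close : forall a b, 0 <= a <= rho -> 0 <= b <= rho -> Rabs (sig a - sig b) < eta ->
    Rabs (a - b) < e).
  { intros a b Ha Hb Hab.
    destruct (bilipschitz_incr_abs Kw 0 rho sig ltac:(lra) sig_bilipschitz a b Ha Hb) as [_ L].
    eapply Rle_lt_trans; [exact L|]. apply Rmult_lt_of_lt_div; lra. }
  intros p Hp Hc. pose proof (Hc O ltac:(lia)) as Hc0.
  destruct p as [y'|s']; unfold hinv, alt in Hc0; simpl in Hp, Hc0 |- *.
  - split; [exact Hp|].
    assert (Hy' : y' + INR (N + 1) * rho <= 0).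
    { apply g_ray_back_linear_of_pi_bounded; auto. intros i Hi.
      specialize (Hc (2 + i)%nat ltac:(lia)). pose proof (hinv_inr_le s (2 + i) Hs) as Hle.
      unfold hinv in Hc, Hle. apply Rabs_def2 in Hc. nra. }
    rewrite plus_INR in Hy'. simpl in Hy'. pose proof (pos_INR N).
    rewrite pi_le in Hc0 by nra.
    pose proof (sig_close _ _ (tri_range rho ltac:(lra) y') Hs Hc0) as Htri.
    destruct (center_of_tri rho ltac:(lra) y' ltac:(nra)) as [m Em].
    exists m. split.
    + pose proof (center_bounds rho m (tri rho y') (tri_range rho ltac:(lra) y')).
      apply INR_lt. nra.
    + fold (center rho m s). rewrite Em at 1. rewrite center_dist. exact Htri.
  - split; [exact Hp|]. apply sig_close; auto.
Qed.

Lemma Ybasic_Yset s e N p : Ybasic rho s e N p -> Yset rho p.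
Proof. destruct p; simpl; tauto. Qed.

Lemma hinv_homeo : homeo (Yset rho) (openY rho) XX (openX XX) hinv.
Proof.
  split; [exact hinv_in_X|]. split; [exact hinv_inj|]. split; [exact hinv_surj|]. split.
  - intros V [_ HV]. split; [tauto|]. intros p [Hp Vp].
    destruct (HV _ Vp) as (eps & Heps & N & HN).
    assert (Near : forall p', Yset rho p' -> (forall n, (n <= N)%nat -> Rabs (hinv p' n - hinv p n) < eps) ->
      Yset rho p' /\ V (hinv p')) by (intros; split; auto; apply HN; auto; apply hinv_in_X; auto).
    destruct p as [y|s]; simpl in Hp.
    + destruct (hinv_inl_close y eps Hp Heps) as (e & He & Hclose).
      exists e. split; [lra|]. intros y' Hy' Hd. apply Near; auto.
    + destruct (hinv_inr_close s eps N Hp Heps) as (e & He & N' & Hclose).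
      exists e. split; [lra|]. exists N'. intros p' Hp'.
      apply Near; [eapply Ybasic_Yset; eauto|]. auto.
  - intros U [HUY HU]. split.
    { intros x (p & Up & <-). apply hinv_in_X, HUY, Up. }
    intros x (p & Up & <-). pose proof (HUY p Up) as Hp. specialize (HU p Up).
    destruct p as [y|s]; simpl in Hp.
    + destruct HU as (e & He & Hball).
      destruct (hinv_inl_separated y e Hp He) as (eta & Heta & M & Hsep).
      exists eta. split; [lra|]. exists M. intros z Hz Hd.
      destruct (hinv_surj z Hz) as (p' & Hp' & <-).
      destruct (Hsep p' Hp' Hd) as (y' & -> & Hy'). exists (inl y'). split; [|reflexivity].
      apply Hball; auto.
    + destruct HU as (e & He & N & Hbasic).
      destruct (hinv_inr_separated s e N Hp He) as (eta & Heta & M & Hsep).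
      exists eta. split; [lra|]. exists M. intros z Hz Hd.
      destruct (hinv_surj z Hz) as (p' & Hp' & <-). exists p'. auto.
Qed.

Lemma ftilde_homeo : homeo XX (openX XX) XX (openX XX) FT.
Proof.
  assert (FT_X : forall x, XX x -> XX (FT x)).
  { intros x Hx [|n]; simpl; [split; [apply f_range, Hx|reflexivity]|apply Hx]. }
  split; [exact FT_X|]. split.
  { intros x y _ _ E. extensionality n. exact (f_equal (fun u => u (S n)) E). }
  split.
  { intros y Hy. exists (fun n => y (S n)). split; [intros n; apply Hy|].
    extensionality n. destruct n as [|n]; [apply Hy|reflexivity]. }
  split.
  - intros V [_ HV]. split; [tauto|]. intros x [Hx Vx].
    destruct (HV _ Vx) as (eps & Heps & N & HN).
    set (Kf := Kw * Kw + / (1 - rho)).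
    assert (0 <= Kf) by (pose proof Kw_ge_1; pose proof (Rinv_0_lt_compat (1 - rho) ltac:(lra));
      unfold Kf; nra).
    exists (eps / (Kf + 1)). split; [apply Rdiv_lt_0_compat; lra|]. exists N.
    intros z Hz Hd. split; [exact Hz|]. apply HN; [apply FT_X, Hz|].
    intros [|n] Hn; simpl.
    + eapply Rle_lt_trans; [apply f_lipschitz; [apply Hz|apply Hx]|].
      apply Rle_lt_trans with ((Kf + 1) * Rabs (z O - x O));
        [pose proof (Rabs_pos (z O - x O)); fold Kf; nra|].
      apply Rmult_lt_of_lt_div; [lra|]. apply Hd. lia.
    + eapply Rlt_le_trans; [apply Hd; lia|].
      pose proof (Rdiv_bounds eps (Kf + 1) 0 eps ltac:(lra) ltac:(nra)). lra.
  - intros U [HUX HU]. split; [intros y (x & Ux & <-); apply FT_X, HUX, Ux|].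
    intros y (x & Ux & <-). destruct (HU x Ux) as (eps & Heps & N & HN).
    exists eps. split; [lra|]. exists (S N). intros z Hz Hd.
    exists (fun n => z (S n)). split.
    + apply HN; [intros n; apply Hz|]. intros n Hn. apply (Hd (S n)). lia.
    + extensionality n. destruct n as [|n]; [apply Hz|reflexivity].
Qed.

Lemma hinv_Xt1 p : Yset rho p -> (Xt1 (hinv p) <-> isinl p).
Proof.
  unfold Xt1, hinv. destruct p as [y|s]; simpl; intros Hp; split; intros H; try contradiction; auto.
  - rewrite <- pi_1. apply lipschitz_on_Un_cv with (D := fun y => y <= 1) (K := Kw);
      [pose proof Kw_ge_1; lra|apply pi_lipschitz|intros; apply g_ray_back_le_1; auto|lra|apply g_ray_back_cv; auto].
  - destruct (H (1 - rho) ltac:(lra)) as [N HN]. specialize (HN N (le_n N)).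
    pose proof (hinv_inr_le s N Hp). unfold R_dist, hinv in *. rewrite Rabs_left1 in HN; lra.
Qed.

Lemma openX_within : opens_within XX (openX XX).
Proof. intros U [HU _]. exact HU. Qed.

Lemma openY_within : opens_within (Yset rho) (openY rho).
Proof. intros U [HU _]. exact HU. Qed.

Definition hmap (x : nat -> R) : R + R :=
  epsilon (inhabits (inl 0)) (fun p => Yset rho p /\ hinv p = x).

Lemma hmap_spec x : XX x -> Yset rho (hmap x) /\ hinv (hmap x) = x.
Proof.
  intros Hx. apply (epsilon_spec (inhabits (inl 0)) (fun p => Yset rho p /\ hinv p = x)), hinv_surj, Hx.
Qed.

Lemma hmap_hinv p : Yset rho p -> hmap (hinv p) = p.
Proof.
  intros Hp. destruct (hmap_spec (hinv p) (hinv_in_X p Hp)) as [Yh Eh]. apply hinv_inj; auto.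
Qed.

Lemma hmap_homeo : homeo XX (openX XX) (Yset rho) (openY rho) hmap.
Proof. apply homeo_inv with hinv; [apply openY_within|apply openX_within|apply hinv_homeo|apply hmap_hinv]. Qed.

Lemma gmap_Yset p : Yset rho p -> Yset rho (gmap rho p).
Proof. destruct p as [y|s]; simpl; intros H; [apply (g_ray_le_1 y H)|lra]. Qed.

Lemma gmap_eq p : Yset rho p -> gmap rho p = hmap (FT (hinv p)).
Proof. intros Hp. rewrite <- hinv_conj, hmap_hinv by auto using gmap_Yset. reflexivity. Qed.

Lemma gmap_homeo : homeo (Yset rho) (openY rho) (Yset rho) (openY rho) (gmap rho).
Proof.
  apply homeo_ext with (fun p => hmap (FT (hinv p))); [apply openY_within| |].
  - apply homeo_comp with (B := XX) (oB := openX XX) (h1 := fun p => FT (hinv p)); [|apply hmap_homeo].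
    apply homeo_comp with (B := XX) (oB := openX XX); [apply hinv_homeo|apply ftilde_homeo].
  - intros p Hp. symmetry. apply gmap_eq, Hp.
Qed.

Lemma hmap_image_iff (Q : R + R -> Prop) (C : (nat -> R) -> Prop) :
  (forall p, Yset rho p -> (C (hinv p) <-> Q p)) ->
  forall y, (Yset rho y /\ Q y) <-> exists x, XX x /\ C x /\ hmap x = y.
Proof.
  intros HQ y. split.
  - intros [Hy Qy]. exists (hinv y). split; [apply hinv_in_X, Hy|]. split; [apply HQ; auto|].
    apply hmap_hinv, Hy.
  - intros (x & Hx & Cx & <-). destruct (hmap_spec x Hx) as [Hh Eh]. split; [exact Hh|].
    apply HQ; [exact Hh|]. rewrite Eh. exact Cx.
Qed.

Lemma conjugacy :
  exists h : (nat -> R) -> R + R,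
    homeo XX (openX XX) (Yset rho) (openY rho) h /\
    (forall x, XX x -> h (FT x) = gmap rho (h x)) /\
    (forall y, (Yset rho y /\ isinl y) <-> exists x, XX x /\ Xt1 x /\ h x = y) /\
    (forall y, (Yset rho y /\ ~ isinl y) <-> exists x, XX x /\ ~ Xt1 x /\ h x = y).
Proof.
  exists hmap. split; [exact hmap_homeo|]. split.
  - intros x Hx. destruct (hmap_spec x Hx) as [Hh Eh]. rewrite gmap_eq, Eh by exact Hh. reflexivity.
  - split; apply hmap_image_iff; intros p Hp; rewrite (hinv_Xt1 p Hp); tauto.
Qed.

End Conjugacy.

Theorem theorem3 (rho delta gamma alpha : R)
  (Hrho : 0 < rho < 1) (Hdelta : 0 < delta)
  (Hgamma : gamma > - delta / rho)
  (Halpha : - delta / rho < alpha < 0)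
  (Hrho1 : rho = f0 rho gamma delta alpha 0) :
  homeo (Yset rho) (openY rho) (Yset rho) (openY rho) (gmap rho) /\
  (exists h : (nat -> R) -> R + R,
     homeo (Xt rho gamma delta alpha) (openX (Xt rho gamma delta alpha))
           (Yset rho) (openY rho) h /\
     (forall x, Xt rho gamma delta alpha x ->
        h (ftilde rho gamma delta alpha x) = gmap rho (h x)) /\
     (forall y, (Yset rho y /\ isinl y) <->
        exists x, Xt rho gamma delta alpha x /\ Xt1 x /\ h x = y) /\
     (forall y, (Yset rho y /\ ~ isinl y) <->
        exists x, Xt rho gamma delta alpha x /\ ~ Xt1 x /\ h x = y)) /\
  (forall x y, x < y -> y <= 1 -> exists a b,
     gmap rho (inl x) = inl a /\ gmap rho (inl y) = inl b /\ a < b) /\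
  gmap rho (inl 1) = inl 1 /\
  (forall x, 0 <= x <= rho -> gmap rho (gmap rho (inr x)) = inr x).
Proof.
  assert (Hgamma' : 0 < gamma * rho + delta).
  { apply Rmult_lt_compat_r with (r := rho) in Hgamma; [|lra].
    replace (- delta / rho * rho) with (- delta) in Hgamma by (field; lra). lra. }
  assert (Halpha' : alpha = - delta).
  { assert (rho * delta = - alpha * rho) by (rewrite Hrho1 at 1; unfold f0; field; lra).
    apply Rmult_eq_reg_l with rho; lra. }
  split; [apply gmap_homeo with gamma delta alpha; auto|].
  split; [apply conjugacy; auto|].
  split; [intros x y Hxy _; exists (g_ray rho x), (g_ray rho y); auto using g_ray_lt|].
  split; [change (inl (B := R) (g_ray rho 1) = inl 1); f_equal; apply g_ray_1; auto|].
  intros x _. simpl. f_equal. ring.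
Qed.
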